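(* Under the hypotheses of the Main Lemma (in particular hypotheses 1–3), define $\alpha_{xy}:=\sum_m u_x(m)u_y(m)$, $\alpha_x:=\sum_y p(y|x)\alpha_{xy}$, $\alpha_y:=\sum_x p(x|y)\alpha_{xy}$, $v_x(m):=\sum_y p(y|x)u_y(m)$, $v_y(m):=\sum_x p(x|y)u_x(m)$, $\Delta:=\frac{c/\varepsilon+1}{\varepsilon}+2$, and let $M_{xy},M_x,M_y$ denote $M$ conditioned on $XY=xy$, on $X=x$, on $Y=y$ respectively. Let $G_1:=\{(x,y): |1-\alpha_{xy}/q|\le1/2,\ |1-\alpha_x/q|\le1/2,\ |1-\alpha_y/q|\le1/2\}$, $G_2:=\{(x,y): S(M_{xy}\|M_x)+S(M_{xy}\|M_y)\le c/\varepsilon\}$, $G:=\{(x,y):\Pr_{m\leftarrow M_{xy}}[u_y(m)/v_x(m)\le2^{\Delta}\text{ and }u_x(m)/v_y(m)\le2^{\Delta}]\ge1-2\varepsilon\}$. Then (1) $\Pr_{(x,y)\leftarrow p}[(x,y)\in G_1]>1-6\varepsilon$; (2) $\Pr_{(x,y)\leftarrow p}[(x,y)\in G_2]\ge1-3\varepsilon/2$; (3) $\Pr_{(x,y)\leftarrow p}[(x,y)\in G_1\cap G_2]\ge1-15\varepsilon/2$; (4) $G_1\cap G_2\subseteq G$.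
   Context: Main Lemma hypotheses: $c\ge1$, $0<\varepsilon<1/3$, $p$ a distribution on finite $\mathcal{X}\times\mathcal{Y}$, $XYM$ jointly distributed on $\mathcal{X}\times\mathcal{Y}\times\mathcal{M}$ ($\mathcal{M}$ finite), functions $u_x,u_y:\mathcal{M}\to[0,1]$, with (1) $\Pr[XYM=xym]=\frac1q p(x,y)u_x(m)u_y(m)$ where $q:=\sum_{x,y,m}p(x,y)u_x(m)u_y(m)>0$; (2) $S(XY\|p)\le\varepsilon^2/4$; (3) $I(X:M\mid Y)+I(Y:M\mid X)\le c$. Here $p(y|x),p(x|y)$ are conditional probabilities under $p$; $S$ is relative entropy and $I$ conditional mutual information (base 2). *)

From mathcomp Require Import all_boot.
From Stdlib Require Import Reals.
Set Implicit Arguments. Unset Strict Implicit. Unset Printing Implicit Defensive.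

Local Open Scope R_scope.

Definition rsum (T : finType) (f : T -> R) : R := \big[Rplus/R0]_(i : T) f i.

Definition Rleb (a b : R) : bool := if Rle_dec a b then true else false.
Definition Rltb (a b : R) : bool := if Rlt_dec a b then true else false.

Definition log2 (x : R) : R := ln x / ln 2.

Definition prob (T : finType) (P : T -> R) (E : T -> bool) : R :=
  rsum (fun t => if E t then P t else 0).

Definition relent (T : finType) (P Q : T -> R) : R :=
  rsum (fun t => if Rltb 0 (P t) then P t * log2 (P t / Q t) else 0).

Section Defs.
Variables (X Y M : finType) (p : X -> Y -> R) (ux : X -> M -> R) (uy : Y -> M -> R).

Definition pX (x : X) : R := rsum (fun y => p x y).
Definition pY (y : Y) : R := rsum (fun x => p x y).
Definition p_y_given_x (x : X) (y : Y) : R := p x y / pX x.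
Definition p_x_given_y (x : X) (y : Y) : R := p x y / pY y.

Definition qc : R := rsum (fun x => rsum (fun y => rsum (fun m => p x y * ux x m * uy y m))).

(* joint distribution of XYM, hypothesis (1) *)
Definition PXYM (x : X) (y : Y) (m : M) : R := p x y * ux x m * uy y m / qc.
Definition PXY (x : X) (y : Y) : R := rsum (fun m => PXYM x y m).
Definition PX (x : X) : R := rsum (fun y => PXY x y).
Definition PY (y : Y) : R := rsum (fun x => PXY x y).
Definition PXM (x : X) (m : M) : R := rsum (fun y => PXYM x y m).
Definition PYM (y : Y) (m : M) : R := rsum (fun x => PXYM x y m).

Definition PXYpair (z : X * Y) : R := PXY z.1 z.2.
Definition ppair (z : X * Y) : R := p z.1 z.2.

Definition CMI_XM_Y : R :=
  rsum (fun x => rsum (fun y => rsum (fun m =>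
    if Rltb 0 (PXYM x y m)
    then PXYM x y m * log2 (PXYM x y m * PY y / (PXY x y * PYM y m)) else 0))).
Definition CMI_YM_X : R :=
  rsum (fun x => rsum (fun y => rsum (fun m =>
    if Rltb 0 (PXYM x y m)
    then PXYM x y m * log2 (PXYM x y m * PX x / (PXY x y * PXM x m)) else 0))).

Definition alpha_xy (x : X) (y : Y) : R := rsum (fun m => ux x m * uy y m).
Definition alpha_x (x : X) : R := rsum (fun y => p_y_given_x x y * alpha_xy x y).
Definition alpha_y (y : Y) : R := rsum (fun x => p_x_given_y x y * alpha_xy x y).
Definition v_x (x : X) (m : M) : R := rsum (fun y => p_y_given_x x y * uy y m).
Definition v_y (y : Y) (m : M) : R := rsum (fun x => p_x_given_y x y * ux x m).

Definition M_xy (x : X) (y : Y) (m : M) : R := PXYM x y m / PXY x y.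
Definition M_x (x : X) (m : M) : R := PXM x m / PX x.
Definition M_y (y : Y) (m : M) : R := PYM y m / PY y.

Definition Delta (c eps : R) : R := (c / eps + 1) / eps + 2.

Definition inG1 (x : X) (y : Y) : bool :=
  [&& Rleb (Rabs (1 - alpha_xy x y / qc)) (1/2),
      Rleb (Rabs (1 - alpha_x x / qc)) (1/2)
    & Rleb (Rabs (1 - alpha_y y / qc)) (1/2)].

Definition inG2 (c eps : R) (x : X) (y : Y) : bool :=
  Rleb (relent (M_xy x y) (M_x x) + relent (M_xy x y) (M_y y)) (c / eps).

(* u_y(m)/v_x(m) <= 2^Delta written as u_y(m) <= 2^Delta * v_x(m) *)
Definition inG (c eps : R) (x : X) (y : Y) : bool :=
  Rleb (1 - 2 * eps)
    (prob (M_xy x y) (fun m =>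
       Rleb (uy y m) (Rpower 2 (Delta c eps) * v_x x m)
       && Rleb (ux x m) (Rpower 2 (Delta c eps) * v_y y m))).

Definition prp (E : X -> Y -> bool) : R := prob ppair (fun z => E z.1 z.2).

End Defs.

(* Hypothesis (2) makes the law of XY eps-close to p in L1, by a Pinsker-type inequality:
   relative entropy bounds the squared Hellinger distance, which bounds the L1 distance.
   The ratios alpha_xy/q, alpha_x/q, alpha_y/q tested by G1 are exactly the likelihood
   ratios of XY (and of its marginals) against p, so G1 fails with p-probability at most
   6 L1.  Averaged over XY, the divergences tested by G2 add up to the two conditional
   mutual informations, so Markov's inequality and hypothesis (3) bound the failure of G2
   under XY by eps; changing the measure from XY to p costs L1/2.  Finally, on G1 we have
   M_xy ~ ux*uy and M_x ~ ux*v_x with normalisations within a factor 4, so the event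
   uy > 2^Delta v_x forces M_xy > 2^k M_x, whose mass is at most eps by a Gibbs-type tail
   bound on S(M_xy||M_x) <= c/eps; symmetrically for ux and v_y. *)

From Pilot Require Import Defs.
From HB Require Import structures.
From mathcomp Require Import all_boot.
From Stdlib Require Import Reals Lra Psatz.
Local Open Scope R_scope.
Set Implicit Arguments. Unset Strict Implicit.

HB.instance Definition _ :=
  Monoid.isComLaw.Build R R0 Rplus (fun a b c => esym (Rplus_assoc a b c)) Rplus_comm Rplus_0_l.

Section FiniteSums.
Variable T : finType.
Implicit Types f g : T -> R.

Lemma rsum_ext f g : (forall t, f t = g t) -> rsum f = rsum g.
Proof. by move=> fg; apply: eq_bigr => t _. Qed.

Lemma rsum_le f g : (forall t, f t <= g t) -> rsum f <= rsum g.
Proof.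
move=> fg; rewrite /rsum; elim/big_rec2: _ => [|t a b _ ab]; first lra.
by have := fg t; lra.
Qed.

Lemma rsum_0 : rsum (fun _ : T => 0) = 0.
Proof. exact: big1. Qed.

Lemma rsum_add f g : rsum (fun t => f t + g t) = rsum f + rsum g.
Proof. exact: big_split. Qed.

Lemma rsum_scal a f : rsum (fun t => a * f t) = a * rsum f.
Proof. by rewrite /rsum (big_morph (Rmult a) (Rmult_plus_distr_l a) (Rmult_0_r a)). Qed.

Lemma rsum_scalr a f : rsum (fun t => f t * a) = rsum f * a.
Proof. by rewrite Rmult_comm -rsum_scal; apply: rsum_ext => t; ring. Qed.

Lemma rsum_sub f g : rsum (fun t => f t - g t) = rsum f - rsum g.
Proof. by rewrite rsum_add /rsum -(big_morph Ropp Ropp_plus_distr Ropp_0). Qed.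

Lemma rsum_ge0 f : (forall t, 0 <= f t) -> 0 <= rsum f.
Proof. by move=> f0; rewrite -rsum_0; apply: rsum_le. Qed.

Lemma rsum_ge_term f t : (forall t, 0 <= f t) -> f t <= rsum f.
Proof.
move=> f0; rewrite /rsum (bigD1 t) //=.
have : 0 <= \big[Rplus/R0]_(i | i != t) f i.
  by elim/big_rec: _ => [|i a _ a0]; [lra | have := f0 i; lra].
lra.
Qed.

Lemma rsum_eq0 f t : (forall t, 0 <= f t) -> rsum f = 0 -> f t = 0.
Proof. by move=> f0 sum0; have := rsum_ge_term t f0; have := f0 t; lra. Qed.

Lemma rsum_abs f : Rabs (rsum f) <= rsum (fun t => Rabs (f t)).
Proof.
rewrite /rsum; elim/big_rec2: _ => [|t a b _ ab]; first by rewrite Rabs_R0; lra.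
by apply: Rle_trans (Rabs_triang _ _) _; lra.
Qed.

Lemma rsum_if (b : bool) f : rsum (fun t => if b then f t else 0) = if b then rsum f else 0.
Proof. by case: b; last exact: rsum_0. Qed.

End FiniteSums.

Lemma rsum_exchange (I J : finType) (F : I -> J -> R) :
  rsum (fun i => rsum (fun j => F i j)) = rsum (fun j => rsum (fun i => F i j)).
Proof. exact: exchange_big. Qed.

Lemma rsum_pair (I J : finType) (F : I -> J -> R) :
  rsum (fun z : I * J => F z.1 z.2) = rsum (fun i => rsum (fun j => F i j)).
Proof. by rewrite /rsum pair_big. Qed.

Lemma RlebP a b : reflect (a <= b) (Rleb a b).
Proof. by rewrite /Rleb; case: Rle_dec => ab; constructor. Qed.

Lemma RltbP a b : reflect (a < b) (Rltb a b).
Proof. by rewrite /Rltb; case: Rlt_dec => ab; constructor. Qed.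

Lemma ln_le_sub1 x : 0 < x -> ln x <= x - 1.
Proof.
move=> x0; have E := exp_ln x x0.
case: (Req_dec (ln x) 0) => [ln0 | ln0]; first by rewrite ln0 exp_0 in E; lra.
by have := exp_ineq1 (ln x) ln0; lra.
Qed.

Lemma ln2_bounds : / 2 < ln 2 < 1.
Proof.
split; first exact: ln_lt_2.
rewrite -[1]ln_exp; apply: ln_increasing; first lra.
by have := exp_ineq1 1 ltac:(lra); lra.
Qed.

(* 2 ^ Delta = 4 * 2 ^ k with k = (c/eps + 1)/eps: the constant 2 of Delta absorbs
   the factor 4 lost when the normalisations alpha are only known up to a factor 3. *)
Lemma Rpower2_Delta c eps :
  Rpower 2 (Defs.Delta c eps) = 4 * Rpower 2 ((c / eps + 1) / eps).
Proof.
have two : Rpower 2 2 = 4 by rewrite -[X in Rpower _ X]/(INR 2) Rpower_pow /=; lra.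
by rewrite /Defs.Delta Rpower_plus two Rmult_comm.
Qed.

Section Events.
Variable T : finType.
Implicit Types (P Q : T -> R) (E : T -> bool).

Lemma prob_compl P E : prob P E = rsum P - prob P (fun t => ~~ E t).
Proof. by rewrite /prob -rsum_sub; apply: rsum_ext => t; case: (E t) => /=; lra. Qed.

Lemma prob_union P E1 E2 : (forall t, 0 <= P t) ->
  prob P (fun t => ~~ (E1 t && E2 t))
  <= prob P (fun t => ~~ E1 t) + prob P (fun t => ~~ E2 t).
Proof.
move=> P0; rewrite /prob -rsum_add; apply: rsum_le => t.
by have := P0 t; case: (E1 t); case: (E2 t) => /=; lra.
Qed.

Lemma prob_le_half_l1 P Q E : rsum P = rsum Q ->
  prob P E <= prob Q E + rsum (fun t => Rabs (P t - Q t)) / 2.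
Proof.
move=> PQ.
have pt t : (if E t then P t else 0)
    <= (if E t then Q t else 0) + / 2 * Rabs (P t - Q t) + / 2 * (P t - Q t).
  by case: (Rcase_abs (P t - Q t)) => s;
     [rewrite Rabs_left | rewrite Rabs_right]; case: (E t); lra.
have := rsum_le pt; rewrite !rsum_add !rsum_scal rsum_sub PQ /prob; lra.
Qed.

Lemma markov P (f : T -> R) a : (forall t, 0 <= P t) ->
  (forall t, 0 < P t -> 0 <= f t) -> 0 < a ->
  a * prob P (fun t => ~~ Rleb (f t) a) <= rsum (fun t => P t * f t).
Proof.
move=> P0 f0 a0; rewrite /prob -rsum_scal; apply: rsum_le => t.
case: RlebP => /= [fa | /Rnot_le_lt fa]; last by have := P0 t; nra.
case: (Rle_lt_or_eq_dec _ _ (P0 t)) => [Pt | <-]; last lra.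
by have := f0 t Pt; nra.
Qed.

End Events.

(* If a > 0 and b/a is more than 1/2 away from 1, then a <= 2|a - b|; this turns
   a deviation of a ratio into a deviation of masses. *)
Lemma far_ratio_mass a b r : 0 <= a -> (0 < a -> r = b / a) ->
  (if ~~ Rleb (Rabs (1 - r)) (1/2) then a else 0) <= 2 * Rabs (a - b).
Proof.
move=> a0 ar; have := Rabs_pos (a - b).
case: RlebP => /= [_ | /Rnot_le_lt far]; first lra.
case: (Rle_lt_or_eq_dec _ _ a0) => [apos | <-]; last lra.
rewrite (ar apos) in far.
have <- : Rabs (1 - b / a) * a = Rabs (a - b).
  by rewrite -{2}(Rabs_pos_eq a) // -Rabs_mult; f_equal; field; lra.
nra.
Qed.

Definition klterm (a b : R) : R := if Rltb 0 a then a * ln (a / b) else 0.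

Lemma klterm_pos a b : 0 < a -> klterm a b = a * ln (a / b).
Proof. by rewrite /klterm => /RltbP ->. Qed.

Lemma klterm_zero b : klterm 0 b = 0.
Proof. by rewrite /klterm; case: RltbP => //; lra. Qed.

Lemma xln_ratio_ge a b : 0 < a -> 0 < b -> a - b <= a * ln (a / b).
Proof.
move=> a0 b0.
have inv : ln (a / b) = - ln (b / a).
  by rewrite /Rdiv ln_mult ?ln_Rinv ?ln_mult ?ln_Rinv; try (apply: Rinv_0_lt_compat); lra.
have := ln_le_sub1 (Rdiv_lt_0_compat _ _ b0 a0).
have : a * (b / a - 1) = b - a by field; lra.
rewrite inv; nra.
Qed.

Lemma sqrt_gap_le_klterm a b : 0 <= a -> 0 <= b -> (0 < a -> 0 < b) ->
  (sqrt a - sqrt b) ^ 2 <= klterm a b + (b - a).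
Proof.
move=> a0 b0 ab.
have sq : (sqrt a - sqrt b) ^ 2 = 2 * (a - sqrt a * sqrt b) + (b - a).
  by rewrite /= Rmult_1_r; have := sqrt_sqrt a a0; have := sqrt_sqrt b b0; nra.
rewrite sq; apply: Rplus_le_compat_r.
case: (Rle_lt_or_eq_dec _ _ a0) => [apos | <-]; last by rewrite klterm_zero sqrt_0; lra.
have bpos := ab apos; have sa := sqrt_lt_R0 a apos; have sb := sqrt_lt_R0 b bpos.
have ratio : a / b = (sqrt a / sqrt b) * (sqrt a / sqrt b).
  by rewrite -{1}(sqrt_sqrt a a0) -{1}(sqrt_sqrt b b0); field; lra.
rewrite klterm_pos // ratio ln_mult; try (apply: Rdiv_lt_0_compat; lra).
have := xln_ratio_ge sa sb; have := sqrt_sqrt a a0; nra.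
Qed.

(* a^2 - b^2 = (a - b)(a + b) split by AM-GM with weight s *)
Lemma sq_diff_le a b s : 0 <= a -> 0 <= b -> 0 < s ->
  Rabs (a * a - b * b) <= s / 2 * (a - b) ^ 2 + (a * a + b * b) / s.
Proof.
move=> a0 b0 s0; apply: (Rmult_le_reg_l s) => //.
have -> : s * (s / 2 * (a - b) ^ 2 + (a * a + b * b) / s)
          = s * s * ((a - b) * (a - b)) / 2 + (a * a + b * b) by field; lra.
have -> : Rabs (a * a - b * b) = Rabs (a - b) * (a + b).
  rewrite -[a + b]Rabs_pos_eq; last lra.
  by rewrite -Rabs_mult; f_equal; ring.
have sqa : Rabs (a - b) * Rabs (a - b) = (a - b) * (a - b).
  by rewrite -Rabs_mult; apply: Rabs_pos_eq; apply: Rle_0_sqr.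
have := Rabs_pos (a - b); have := Rle_0_sqr (s * Rabs (a - b) - (a + b)).
rewrite /Rsqr; nra.
Qed.

Section RelativeEntropy.
Variable T : finType.
Implicit Types (P Q : T -> R) (E : T -> bool).

Definition dominated P Q : Prop :=
  [/\ (forall t, 0 <= P t), (forall t, 0 <= Q t), rsum P = 1, rsum Q <= 1
    & (forall t, 0 < P t -> 0 < Q t)].

Lemma relent_ln P Q : ln 2 * relent P Q = rsum (fun t => klterm (P t) (Q t)).
Proof.
rewrite /relent -rsum_scal; apply: rsum_ext => t; rewrite /klterm /log2.
by case: Rltb; [have := ln2_bounds => ln2; field | ring]; lra.
Qed.

Lemma hellinger_le_relent P Q : dominated P Q ->
  rsum (fun t => (sqrt (P t) - sqrt (Q t)) ^ 2) <= ln 2 * relent P Q.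
Proof.
case=> P0 Q0 P1 Q1 PQ; rewrite relent_ln.
have := rsum_le (fun t => sqrt_gap_le_klterm (P0 t) (Q0 t) (@PQ t)).
by rewrite rsum_add rsum_sub P1; lra.
Qed.

Lemma relent_ge0 P Q : dominated P Q -> 0 <= relent P Q.
Proof.
move=> PQ; have := hellinger_le_relent PQ; have := ln2_bounds.
have : 0 <= rsum (fun t => (sqrt (P t) - sqrt (Q t)) ^ 2).
  by apply: rsum_ge0 => t; apply: pow2_ge_0.
nra.
Qed.

Lemma l1_le_hellinger P Q s : (forall t, 0 <= P t) -> (forall t, 0 <= Q t) -> 0 < s ->
  rsum (fun t => Rabs (P t - Q t))
  <= s / 2 * rsum (fun t => (sqrt (P t) - sqrt (Q t)) ^ 2) + (rsum P + rsum Q) / s.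
Proof.
move=> P0 Q0 s0; rewrite -rsum_scal /Rdiv -rsum_add -rsum_scalr -rsum_add.
apply: rsum_le => t; have := sq_diff_le (sqrt_pos (P t)) (sqrt_pos (Q t)) s0.
by rewrite !sqrt_sqrt.
Qed.

Lemma l1_lt_of_relent P Q e : dominated P Q -> 0 < e -> relent P Q <= e ^ 2 / 4 ->
  rsum (fun t => Rabs (P t - Q t)) < e.
Proof.
move=> PQ e0 small; have [P0 Q0 P1 Q1 _] := PQ.
have s0 : 0 < 4 / e by apply: Rdiv_lt_0_compat; lra.
have := l1_le_hellinger P0 Q0 s0; have := hellinger_le_relent PQ.
set H := rsum _; move=> hel l1_hel; have := ln2_bounds => ln2.
have : 4 / e / 2 * H <= 2 / e * (ln 2 * (e ^ 2 / 4)).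
  have -> : 4 / e / 2 * H = 2 / e * H by field; lra.
  apply: Rmult_le_compat_l; first by apply: Rlt_le; apply: Rdiv_lt_0_compat; lra.
  by apply: Rle_trans hel _; apply: Rmult_le_compat_l; lra.
have -> : 2 / e * (ln 2 * (e ^ 2 / 4)) = ln 2 * e / 2 by field; lra.
have : (rsum P + rsum Q) / (4 / e) <= e / 2.
  by rewrite (_ : _ / (4 / e) = (rsum P + rsum Q) * e / 4); [nra | field; lra].
nra.
Qed.

(* pointwise form of the tail bound below *)
Lemma klterm_tail_pt (e : bool) a b k : 0 <= a -> 0 <= b -> (0 < a -> 0 < b) ->
  (e -> 0 < a -> Rpower 2 k * b < a) ->
  k * ln 2 * (if e then a else 0) + a - (if e then a else 0) - (if e then 0 else b)
  <= klterm a b.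
Proof.
move=> a0 b0 ab tail.
case: (Rle_lt_or_eq_dec _ _ a0) => [apos | <-]; last by rewrite klterm_zero; case: e tail; lra.
rewrite klterm_pos //; have bpos := ab apos; case: e tail => tail; last first.
  by have := xln_ratio_ge apos bpos; lra.
have : k * ln 2 < ln (a / b).
  rewrite -[k * ln 2]ln_exp; apply: ln_increasing; first exact: exp_pos.
  have := tail isT apos; rewrite /Rpower => big.
  apply: (Rmult_lt_reg_r b) => //.
  by rewrite /Rdiv Rmult_assoc Rinv_l ?Rmult_1_r; lra.
nra.
Qed.

Lemma relent_tail P Q E k : dominated P Q ->
  (forall t, E t -> 0 < P t -> Rpower 2 k * Q t < P t) ->
  (k * ln 2 - 1) * prob P E <= ln 2 * relent P Q.
Proof.
move=> [P0 Q0 P1 Q1 PQ] tail; rewrite relent_ln.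
have := rsum_le (fun t => klterm_tail_pt (P0 t) (Q0 t) (@PQ t) (@tail t)).
rewrite !rsum_sub rsum_add rsum_scal P1 -/(prob P E).
have : rsum (fun t => if E t then 0 else Q t) <= 1.
  by apply: Rle_trans Q1; apply: rsum_le => t; case: (E t); have := Q0 t; lra.
lra.
Qed.

Lemma relent_tail_eps P Q E c eps : dominated P Q -> 0 < eps < 1/3 -> 0 <= c ->
  relent P Q <= c / eps ->
  (forall t, E t -> 0 < P t -> Rpower 2 ((c / eps + 1) / eps) * Q t < P t) ->
  prob P E <= eps.
Proof.
move=> PQ eps_bd c0 div tail.
have := relent_tail PQ tail; set k := (c / eps + 1) / eps => gibbs.
have ln2 := ln2_bounds; have ce : 0 <= c / eps by apply: Rle_mult_inv_pos; lra.
have k3 : 3 <= k.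
  apply: (Rmult_le_reg_l eps); first lra.
  have -> : eps * k = c / eps + 1 by rewrite /k; field; lra.
  lra.
have keps : (k * ln 2 - 1) * eps = (c / eps + 1) * ln 2 - eps by rewrite /k; field; lra.
have kpos : 0 < k * ln 2 - 1 by nra.
apply: (Rmult_le_reg_l _ _ _ kpos); rewrite keps.
apply: Rle_trans gibbs _; apply: Rle_trans (_ : ln 2 * (c / eps) <= _); last lra.
by apply: Rmult_le_compat_l; lra.
Qed.

End RelativeEntropy.

Lemma ratio_gap a b v A B K : 0 < A -> 0 < B -> A <= 4 * B ->
  0 <= a -> 0 <= v -> 0 < K -> 0 < a * b / A -> 4 * K * v < b ->
  K * (a * v / B) < a * b / A.
Proof.
move=> A0 B0 AB a0 v0 K0 Ppos gap.
have apos : 0 < a.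
  case: (Rle_lt_or_eq_dec _ _ a0) => // a_eq0.
  by rewrite -a_eq0 /Rdiv !Rmult_0_l in Ppos; lra.
have invB : / B <= 4 * / A.
  apply: (Rmult_le_reg_l (A * B)); first nra.
  have -> : A * B * / B = A by field; lra.
  have -> : A * B * (4 * / A) = 4 * B by field; lra.
  lra.
have Kav : 0 <= K * a * v by apply: Rmult_le_pos; nra.
have iA := Rinv_0_lt_compat _ A0.
apply: (Rle_lt_trans _ (4 * (K * a * v) * / A)).
  by rewrite /Rdiv; nra.
by rewrite /Rdiv; apply: Rmult_lt_compat_r => //; nra.
Qed.

Lemma product_form_tail (T : finType) (P Q a b v : T -> R) (A B c eps : R) :
  dominated P Q -> 0 < eps < 1/3 -> 0 <= c -> relent P Q <= c / eps ->
  0 < A -> 0 < B -> A <= 4 * B ->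
  (forall t, P t = a t * b t / A) -> (forall t, Q t = a t * v t / B) ->
  (forall t, 0 <= a t) -> (forall t, 0 <= v t) ->
  prob P (fun t => ~~ Rleb (b t) (Rpower 2 (Defs.Delta c eps) * v t)) <= eps.
Proof.
move=> PQ eps_bd c0 div A0 B0 AB Pdef Qdef a0 v0.
apply: (relent_tail_eps PQ eps_bd c0 div) => t.
rewrite Rpower2_Delta Pdef Qdef => /RlebP /Rnot_le_lt gap Ppos.
by apply: ratio_gap => //; apply: exp_pos.
Qed.

Lemma ratio_near_one r q : 0 < q -> Rabs (1 - r / q) <= 1/2 -> q / 2 <= r <= 3 * q / 2.
Proof.
move=> q0; set t := r / q => near.
have := Rle_abs (1 - t); have := Rle_abs (- (1 - t)); rewrite Rabs_Ropp.
have -> : r = t * q by rewrite /t; field; lra.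
split; nra.
Qed.

(* rescaling a log2-summand of a conditional distribution by the conditioning mass s *)
Lemma relent_term_scale a s b d : 0 <= a -> 0 <= s -> (s = 0 -> a = 0) ->
  (0 < a -> 0 < b) -> (0 < s -> 0 < d) ->
  s * (if Rltb 0 (a / s) then a / s * log2 (a / s / (b / d)) else 0) =
  (if Rltb 0 a then a * log2 (a * d / (s * b)) else 0).
Proof.
move=> a0 s0 s_eq0 ab sd.
have no00 : Rltb 0 0 = false by case: RltbP => //; lra.
case: (Rle_lt_or_eq_dec _ _ s0) => [spos | s_0]; last first.
  by rewrite -s_0 (s_eq0 (esym s_0)) Rmult_0_l no00.
case: (Rle_lt_or_eq_dec _ _ a0) => [apos | <-]; last first.
  by rewrite /Rdiv Rmult_0_l no00; ring.
have bpos := ab apos; have dpos := sd spos.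
case: RltbP => [_ | ]; last by have := Rdiv_lt_0_compat _ _ apos spos.
case: RltbP => [_ | ] //.
have -> : a / s / (b / d) = a * d / (s * b) by field; lra.
by field; lra.
Qed.

Lemma sum_ppair (X Y : finType) (p : X -> Y -> R) :
  rsum (fun x => rsum (fun y => p x y)) = 1 -> rsum (ppair p) = 1.
Proof. by rewrite /ppair (rsum_pair (fun x y => p x y)). Qed.

Lemma prp_compl (X Y : finType) (p : X -> Y -> R) (E : X -> Y -> bool) :
  rsum (fun x => rsum (fun y => p x y)) = 1 ->
  prp p E = 1 - prob (ppair p) (fun z => ~~ E z.1 z.2).
Proof. by move=> hp1; rewrite /prp prob_compl sum_ppair. Qed.

(* The setting of the Main Lemma: hypothesis (1) is built into the definition of PXYM. *)
Section Model.
Variables (X Y M : finType) (p : X -> Y -> R) (ux : X -> M -> R) (uy : Y -> M -> R).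
Hypothesis hp0 : forall x y, 0 <= p x y.
Hypothesis hp1 : rsum (fun x => rsum (fun y => p x y)) = 1.
Hypothesis hux : forall x m, 0 <= ux x m.
Hypothesis huy : forall y m, 0 <= uy y m.
Hypothesis hq : 0 < qc p ux uy.

Local Notation q := (qc p ux uy).
Local Notation PXYM := (PXYM p ux uy).
Local Notation PXY := (PXY p ux uy).
Local Notation PX := (PX p ux uy).
Local Notation PY := (PY p ux uy).
Local Notation PXM := (PXM p ux uy).
Local Notation PYM := (PYM p ux uy).
Local Notation pX := (pX p).
Local Notation pY := (pY p).
Local Notation alpha_xy := (alpha_xy ux uy).
Local Notation alpha_x := (alpha_x p ux uy).
Local Notation alpha_y := (alpha_y p ux uy).
Local Notation M_xy := (M_xy p ux uy).
Local Notation M_x := (M_x p ux uy).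
Local Notation M_y := (M_y p ux uy).

Lemma PXYM_ge0 x y m : 0 <= PXYM x y m.
Proof.
apply: Rle_mult_inv_pos => //.
by have := hux x m; have := huy y m; have := hp0 x y; move=> *; apply: Rmult_le_pos; nra.
Qed.

Lemma PXY_ge0 x y : 0 <= PXY x y.
Proof. by apply: rsum_ge0 => m; apply: PXYM_ge0. Qed.

Lemma PXY_eq x y : PXY x y = p x y * alpha_xy x y / q.
Proof.
rewrite /Defs.PXY /Defs.alpha_xy (_ : forall A, p x y * A / q = p x y / q * A);
  last by move=> A; field; lra.
by rewrite -rsum_scal; apply: rsum_ext => m; rewrite /Defs.PXYM; field; lra.
Qed.

Lemma PXY_pos_p x y : 0 < PXY x y -> 0 < p x y.
Proof.
rewrite PXY_eq; case: (Rle_lt_or_eq_dec _ _ (hp0 x y)) => // <-.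
by rewrite !Rmult_0_l /Rdiv Rmult_0_l; lra.
Qed.

Lemma PXY_pos x y : 0 < p x y -> 0 < alpha_xy x y -> 0 < PXY x y.
Proof. by move=> p0 a0; rewrite PXY_eq; apply: Rdiv_lt_0_compat => //; nra. Qed.

Lemma sum_PXYpair : rsum (PXYpair p ux uy) = 1.
Proof.
rewrite /PXYpair (rsum_pair (fun x y => PXY x y)).
rewrite (rsum_ext (g := fun x => / q * rsum (fun y => rsum (fun m => p x y * ux x m * uy y m)))).
  by rewrite rsum_scal Rinv_l; lra.
move=> x; rewrite -rsum_scal; apply: rsum_ext => y.
by rewrite /Defs.PXY -rsum_scal; apply: rsum_ext => m; rewrite /Defs.PXYM; field; lra.
Qed.

Lemma p_le_pX x y : p x y <= pX x.
Proof. by apply: (rsum_ge_term (f := fun y => p x y)) => ?; apply: hp0. Qed.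

Lemma p_le_pY x y : p x y <= pY y.
Proof. by apply: (rsum_ge_term (f := fun x => p x y)) => ?; apply: hp0. Qed.

Lemma PXY_le_PX x y : PXY x y <= PX x.
Proof. by apply: (rsum_ge_term (f := fun y => PXY x y)) => ?; apply: PXY_ge0. Qed.

Lemma PXY_le_PY x y : PXY x y <= PY y.
Proof. by apply: (rsum_ge_term (f := fun x => PXY x y)) => ?; apply: PXY_ge0. Qed.

Lemma PXYM_le_PXM x y m : PXYM x y m <= PXM x m.
Proof. by apply: (rsum_ge_term (f := fun y => PXYM x y m)) => ?; apply: PXYM_ge0. Qed.

Lemma PXYM_le_PYM x y m : PXYM x y m <= PYM y m.
Proof. by apply: (rsum_ge_term (f := fun x => PXYM x y m)) => ?; apply: PXYM_ge0. Qed.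

Lemma PXYM_eq0 x y m : PXY x y = 0 -> PXYM x y m = 0.
Proof. by apply: (rsum_eq0 (f := fun m => PXYM x y m)) => ?; apply: PXYM_ge0. Qed.

Lemma sum_PXM x : rsum (PXM x) = PX x.
Proof. exact: (rsum_exchange (fun m y => PXYM x y m)). Qed.

Lemma sum_PYM y : rsum (PYM y) = PY y.
Proof. exact: (rsum_exchange (fun m x => PXYM x y m)). Qed.

Lemma alpha_x_eq x : 0 < pX x -> alpha_x x / q = PX x / pX x.
Proof.
move=> px0; rewrite /Defs.PX /Defs.alpha_x /Rdiv -!rsum_scalr.
by apply: rsum_ext => y; rewrite PXY_eq /p_y_given_x; field; lra.
Qed.

Lemma alpha_y_eq y : 0 < pY y -> alpha_y y / q = PY y / pY y.
Proof.
move=> py0; rewrite /Defs.PY /Defs.alpha_y /Rdiv -!rsum_scalr.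
by apply: rsum_ext => x; rewrite PXY_eq /p_x_given_y; field; lra.
Qed.

Lemma Mxy_Mx_dominated x y : 0 < PXY x y -> dominated (M_xy x y) (M_x x).
Proof.
move=> pxy0; have px0 : 0 < PX x by have := PXY_le_PX x y; lra.
split=> [m | m | | | m].
- by apply: Rle_mult_inv_pos => //; apply: PXYM_ge0.
- by apply: Rle_mult_inv_pos => //; apply: rsum_ge0 => ?; apply: PXYM_ge0.
- rewrite /Defs.M_xy /Rdiv rsum_scalr; change (PXY x y * / PXY x y = 1).
  by rewrite Rinv_r; lra.
- by rewrite /Defs.M_x /Rdiv rsum_scalr sum_PXM Rinv_r; lra.
- move=> mxy0; apply: Rdiv_lt_0_compat => //; have := PXYM_le_PXM x y m.
  by have := PXYM_ge0 x y m; rewrite /Defs.M_xy in mxy0; have := Rinv_0_lt_compat _ pxy0; nra.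
Qed.

Lemma Mxy_My_dominated x y : 0 < PXY x y -> dominated (M_xy x y) (M_y y).
Proof.
move=> pxy0; have py0 : 0 < PY y by have := PXY_le_PY x y; lra.
split=> [m | m | | | m].
- by apply: Rle_mult_inv_pos => //; apply: PXYM_ge0.
- by apply: Rle_mult_inv_pos => //; apply: rsum_ge0 => ?; apply: PXYM_ge0.
- rewrite /Defs.M_xy /Rdiv rsum_scalr; change (PXY x y * / PXY x y = 1).
  by rewrite Rinv_r; lra.
- by rewrite /Defs.M_y /Rdiv rsum_scalr sum_PYM Rinv_r; lra.
- move=> mxy0; apply: Rdiv_lt_0_compat => //; have := PXYM_le_PYM x y m.
  by have := PXYM_ge0 x y m; rewrite /Defs.M_xy in mxy0; have := Rinv_0_lt_compat _ pxy0; nra.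
Qed.

Lemma v_x_ge0 x m : 0 < pX x -> 0 <= v_x p uy x m.
Proof.
move=> px0; apply: rsum_ge0 => y; apply: Rmult_le_pos => //.
exact: Rle_mult_inv_pos.
Qed.

Lemma v_y_ge0 y m : 0 < pY y -> 0 <= v_y p ux y m.
Proof.
move=> py0; apply: rsum_ge0 => x; apply: Rmult_le_pos => //.
exact: Rle_mult_inv_pos.
Qed.

Lemma Mxy_eq x y m : 0 < p x y -> 0 < alpha_xy x y ->
  M_xy x y m = ux x m * uy y m / alpha_xy x y.
Proof. by move=> p0 a0; rewrite /Defs.M_xy PXY_eq /Defs.PXYM; field; lra. Qed.

Lemma Mx_eq x m : 0 < pX x -> 0 < alpha_x x ->
  M_x x m = ux x m * v_x p uy x m / alpha_x x.
Proof.
move=> px0 a0; set S := rsum (fun y => p x y * uy y m).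
have PXdef : PX x = pX x * (alpha_x x / q) by rewrite alpha_x_eq //; field; lra.
have PXMdef : PXM x m = ux x m / q * S.
  by rewrite -rsum_scal; apply: rsum_ext => y; rewrite /Defs.PXYM; field; lra.
have vdef : v_x p uy x m = S / pX x.
  by rewrite /Rdiv -rsum_scalr; apply: rsum_ext => y; rewrite /p_y_given_x; field; lra.
by rewrite /Defs.M_x PXdef PXMdef vdef; field; lra.
Qed.

Lemma My_eq y m : 0 < pY y -> 0 < alpha_y y ->
  M_y y m = uy y m * v_y p ux y m / alpha_y y.
Proof.
move=> py0 a0; set S := rsum (fun x => p x y * ux x m).
have PYdef : PY y = pY y * (alpha_y y / q) by rewrite alpha_y_eq //; field; lra.
have PYMdef : PYM y m = uy y m / q * S.
  by rewrite -rsum_scal; apply: rsum_ext => x; rewrite /Defs.PXYM; field; lra.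
have vdef : v_y p ux y m = S / pY y.
  by rewrite /Rdiv -rsum_scalr; apply: rsum_ext => x; rewrite /p_x_given_y; field; lra.
by rewrite /Defs.M_y PYdef PYMdef vdef; field; lra.
Qed.

Definition l1 : R := rsum (fun z => Rabs (PXYpair p ux uy z - ppair p z)).

Lemma l1_pairs : l1 = rsum (fun x => rsum (fun y => Rabs (PXY x y - p x y))).
Proof. exact: (rsum_pair (fun x y => Rabs (PXY x y - p x y))). Qed.

Lemma l1_lt e : 0 < e -> relent (PXYpair p ux uy) (ppair p) <= e ^ 2 / 4 -> l1 < e.
Proof.
move=> e0; apply: l1_lt_of_relent => //; split=> [[x y] | [x y] | | | [x y]].
- exact: PXY_ge0.
- exact: hp0.
- exact: sum_PXYpair.
- by rewrite (sum_ppair hp1); lra.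
- exact: PXY_pos_p.
Qed.

Lemma marginal_x_dev x : Rabs (pX x - PX x) <= rsum (fun y => Rabs (PXY x y - p x y)).
Proof.
rewrite (Rabs_minus_sym (pX x)) /Defs.PX /Defs.pX -rsum_sub; exact: rsum_abs.
Qed.

Lemma marginal_y_dev y : Rabs (pY y - PY y) <= rsum (fun x => Rabs (PXY x y - p x y)).
Proof.
rewrite (Rabs_minus_sym (pY y)) /Defs.PY /Defs.pY -rsum_sub; exact: rsum_abs.
Qed.

Lemma alpha_xy_far : prob (ppair p)
  (fun z => ~~ Rleb (Rabs (1 - alpha_xy z.1 z.2 / q)) (1/2)) <= 2 * l1.
Proof.
rewrite /prob /l1 -rsum_scal; apply: rsum_le => -[x y]; rewrite /ppair /PXYpair /=.
rewrite (Rabs_minus_sym (PXY x y)); apply: far_ratio_mass => // px0.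
by rewrite PXY_eq; field; lra.
Qed.

Lemma alpha_x_far : prob (ppair p)
  (fun z => ~~ Rleb (Rabs (1 - alpha_x z.1 / q)) (1/2)) <= 2 * l1.
Proof.
rewrite /prob /ppair l1_pairs -rsum_scal.
rewrite (rsum_pair (fun x y => if ~~ Rleb (Rabs (1 - alpha_x x / q)) (1/2) then p x y else 0)).
apply: rsum_le => x; rewrite rsum_if.
apply: Rle_trans (_ : 2 * Rabs (pX x - PX x) <= _); last by have := marginal_x_dev x; lra.
by apply: far_ratio_mass; [apply: rsum_ge0 | apply: alpha_x_eq].
Qed.

Lemma alpha_y_far : prob (ppair p)
  (fun z => ~~ Rleb (Rabs (1 - alpha_y z.2 / q)) (1/2)) <= 2 * l1.
Proof.
rewrite /prob /ppair l1_pairs.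
rewrite (rsum_pair (fun x y => if ~~ Rleb (Rabs (1 - alpha_y y / q)) (1/2) then p x y else 0)).
rewrite rsum_exchange (rsum_exchange (fun x y => Rabs (PXY x y - p x y))) -rsum_scal.
apply: rsum_le => y; rewrite rsum_if.
apply: Rle_trans (_ : 2 * Rabs (pY y - PY y) <= _); last by have := marginal_y_dev y; lra.
by apply: far_ratio_mass; [apply: rsum_ge0 | apply: alpha_y_eq].
Qed.

Lemma G1_fail : prob (ppair p) (fun z => ~~ inG1 p ux uy z.1 z.2) <= 6 * l1.
Proof.
have p0 : forall z, 0 <= ppair p z by move=> [x y]; apply: hp0.
pose near_xy (z : X * Y) := Rleb (Rabs (1 - alpha_xy z.1 z.2 / q)) (1/2).
pose near_x (z : X * Y) := Rleb (Rabs (1 - alpha_x z.1 / q)) (1/2).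
pose near_y (z : X * Y) := Rleb (Rabs (1 - alpha_y z.2 / q)) (1/2).
apply: Rle_trans (prob_union near_xy (fun z => near_x z && near_y z) p0) _.
apply: Rle_trans (Rplus_le_compat_l _ _ _ (prob_union near_x near_y p0)) _.
have far_xy : prob (ppair p) (fun z => ~~ near_xy z) <= 2 * l1 := alpha_xy_far.
have far_x : prob (ppair p) (fun z => ~~ near_x z) <= 2 * l1 := alpha_x_far.
have far_y : prob (ppair p) (fun z => ~~ near_y z) <= 2 * l1 := alpha_y_far.
lra.
Qed.

Local Notation cond_div x y :=
  (relent (M_xy x y) (M_x x) + relent (M_xy x y) (M_y y)).

Lemma cond_div_ge0 x y : 0 < PXY x y -> 0 <= cond_div x y.
Proof.
move=> pxy0; apply: Rplus_le_le_0_compat; apply: relent_ge0.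
  exact: Mxy_Mx_dominated.
exact: Mxy_My_dominated.
Qed.

Lemma expected_cond_div :
  rsum (fun z => PXYpair p ux uy z * cond_div z.1 z.2) = CMI_YM_X p ux uy + CMI_XM_Y p ux uy.
Proof.
rewrite /PXYpair (rsum_pair (fun x y => PXY x y * cond_div x y)).
rewrite (rsum_ext (g := fun x => rsum (fun y => PXY x y * relent (M_xy x y) (M_x x))
                            + rsum (fun y => PXY x y * relent (M_xy x y) (M_y y)))); last first.
  by move=> x; rewrite -rsum_add; apply: rsum_ext => y; ring.
rewrite rsum_add /CMI_YM_X /CMI_XM_Y; congr (_ + _);
  apply: rsum_ext => x; apply: rsum_ext => y; rewrite /relent -rsum_scal;
  apply: rsum_ext => m; apply: relent_term_scale.
all: try exact: PXYM_ge0; try exact: PXY_ge0; try exact: PXYM_eq0.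
- by have := PXYM_le_PXM x y m; lra.
- by have := PXY_le_PX x y; lra.
- by have := PXYM_le_PYM x y m; lra.
- by have := PXY_le_PY x y; lra.
Qed.

Lemma G2_fail_XY c eps : 0 < c -> 0 < eps -> CMI_XM_Y p ux uy + CMI_YM_X p ux uy <= c ->
  prob (PXYpair p ux uy) (fun z => ~~ inG2 p ux uy c eps z.1 z.2) <= eps.
Proof.
move=> c0 eps0 cmi; have ce : 0 < c / eps by apply: Rdiv_lt_0_compat.
have mk : c / eps * prob (PXYpair p ux uy) (fun z => ~~ inG2 p ux uy c eps z.1 z.2)
          <= CMI_YM_X p ux uy + CMI_XM_Y p ux uy.
  rewrite -expected_cond_div.
  exact: (markov (f := fun z => cond_div z.1 z.2) (fun z => PXY_ge0 z.1 z.2)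
            (fun z => @cond_div_ge0 z.1 z.2) ce).
apply: (Rmult_le_reg_l _ _ _ ce).
by rewrite (_ : c / eps * eps = c); [lra | field; lra].
Qed.

Lemma G2_fail c eps : 0 < c -> 0 < eps -> CMI_XM_Y p ux uy + CMI_YM_X p ux uy <= c ->
  prob (ppair p) (fun z => ~~ inG2 p ux uy c eps z.1 z.2) <= eps + l1 / 2.
Proof.
move=> c0 eps0 cmi; have := G2_fail_XY c0 eps0 cmi.
have := @prob_le_half_l1 _ (ppair p) (PXYpair p ux uy) (fun z => ~~ inG2 p ux uy c eps z.1 z.2).
rewrite (sum_ppair hp1) sum_PXYpair (rsum_ext (g := fun z => Rabs (PXYpair p ux uy z - ppair p z))).
  by rewrite -/l1 => /(_ erefl); lra.
by move=> z; apply: Rabs_minus_sym.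
Qed.

Lemma G1_alpha_bounds x y : inG1 p ux uy x y ->
  [/\ q / 2 <= alpha_xy x y <= 3 * q / 2, q / 2 <= alpha_x x <= 3 * q / 2
    & q / 2 <= alpha_y y <= 3 * q / 2].
Proof. by case/and3P => /RlebP ? /RlebP ? /RlebP ?; split; apply: ratio_near_one. Qed.

Lemma tail_x c eps x y : 0 < eps < 1/3 -> 0 <= c -> 0 < p x y -> inG1 p ux uy x y ->
  relent (M_xy x y) (M_x x) <= c / eps ->
  prob (M_xy x y) (fun m => ~~ Rleb (uy y m) (Rpower 2 (Defs.Delta c eps) * v_x p uy x m))
  <= eps.
Proof.
move=> eps_bd c0 pxy G1 div; have [axy ax _] := G1_alpha_bounds G1.
have px0 : 0 < pX x by have := p_le_pX x y; lra.
have axy0 : 0 < alpha_xy x y by lra.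
have dom := Mxy_Mx_dominated (PXY_pos pxy axy0).
apply: (product_form_tail (a := ux x) (b := uy y) (v := v_x p uy x)
         (A := alpha_xy x y) (B := alpha_x x) dom eps_bd c0 div); try lra.
- by move=> m; apply: Mxy_eq => //; lra.
- by move=> m; apply: Mx_eq => //; lra.
- exact: hux x.
- by move=> m; apply: v_x_ge0.
Qed.

Lemma tail_y c eps x y : 0 < eps < 1/3 -> 0 <= c -> 0 < p x y -> inG1 p ux uy x y ->
  relent (M_xy x y) (M_y y) <= c / eps ->
  prob (M_xy x y) (fun m => ~~ Rleb (ux x m) (Rpower 2 (Defs.Delta c eps) * v_y p ux y m))
  <= eps.
Proof.
move=> eps_bd c0 pxy G1 div; have [axy _ ay] := G1_alpha_bounds G1.
have py0 : 0 < pY y by have := p_le_pY x y; lra.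
have axy0 : 0 < alpha_xy x y by lra.
have dom := Mxy_My_dominated (PXY_pos pxy axy0).
apply: (product_form_tail (a := uy y) (b := ux x) (v := v_y p ux y)
         (A := alpha_xy x y) (B := alpha_y y) dom eps_bd c0 div); try lra.
- by move=> m; rewrite Mxy_eq 1?Rmult_comm //; lra.
- by move=> m; apply: My_eq => //; lra.
- exact: huy y.
- by move=> m; apply: v_y_ge0.
Qed.

(* claim (4): on G1 and G2 both bad events have mass <= eps, so the good one >= 1 - 2 eps *)
Lemma G1_G2_sub_G c eps x y : 0 < c -> 0 < eps < 1/3 -> 0 < p x y ->
  inG1 p ux uy x y -> inG2 p ux uy c eps x y -> inG p ux uy c eps x y.
Proof.
move=> c0 eps_bd pxy G1 /RlebP G2; have [axy _ _] := G1_alpha_bounds G1.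
have pos : 0 < PXY x y by apply: PXY_pos => //; lra.
have [Mxy0 _ Mxy1 _ _] := Mxy_Mx_dominated pos.
have dx := relent_ge0 (Mxy_Mx_dominated pos); have dy := relent_ge0 (Mxy_My_dominated pos).
have tx := @tail_x c eps x y eps_bd (Rlt_le _ _ c0) pxy G1 ltac:(lra).
have ty := @tail_y c eps x y eps_bd (Rlt_le _ _ c0) pxy G1 ltac:(lra).
apply/RlebP; rewrite prob_compl Mxy1.
have := prob_union
  (fun m => Rleb (uy y m) (Rpower 2 (Defs.Delta c eps) * v_x p uy x m))
  (fun m => Rleb (ux x m) (Rpower 2 (Defs.Delta c eps) * v_y p ux y m)) Mxy0.
lra.
Qed.

End Model.

Theorem mainTheorem6 (X Y M : finType) (p : X -> Y -> R)
  (ux : X -> M -> R) (uy : Y -> M -> R) (c eps : R)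
  (hc : 1 <= c) (heps0 : 0 < eps) (heps1 : eps < 1/3)
  (hp0 : forall x y, 0 <= p x y)
  (hp1 : rsum (fun x => rsum (fun y => p x y)) = 1)
  (hux : forall x m, 0 <= ux x m <= 1)
  (huy : forall y m, 0 <= uy y m <= 1)
  (hq : 0 < qc p ux uy)
  (h2 : relent (PXYpair p ux uy) (ppair p) <= eps ^ 2 / 4)
  (h3 : CMI_XM_Y p ux uy + CMI_YM_X p ux uy <= c) :
  prp p (inG1 p ux uy) > 1 - 6 * eps /\
  prp p (inG2 p ux uy c eps) >= 1 - 3 * eps / 2 /\
  prp p (fun x y => inG1 p ux uy x y && inG2 p ux uy c eps x y) >= 1 - 15 * eps / 2 /\
  (forall x y, 0 < p x y -> inG1 p ux uy x y -> inG2 p ux uy c eps x y ->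
     inG p ux uy c eps x y).
Proof.
have ux0 x m : 0 <= ux x m by case: (hux x m).
have uy0 y m : 0 <= uy y m by case: (huy y m).
have c0 : 0 < c by lra.
have l1_small : l1 p ux uy < eps := l1_lt hp0 hp1 ux0 uy0 hq heps0 h2.
have l1_ge0 : 0 <= l1 p ux uy by apply: rsum_ge0 => z; apply: Rabs_pos.
have fail1 := G1_fail (ux := ux) (uy := uy) hp0 hq.
have fail2 := G2_fail hp0 hp1 ux0 uy0 hq c0 heps0 h3.
have fail12 := prob_union (P := ppair p) (fun z => inG1 p ux uy z.1 z.2)
                 (fun z => inG2 p ux uy c eps z.1 z.2) (fun z => hp0 z.1 z.2).
rewrite !prp_compl //.
split; [lra | split; [lra | split; [lra | ]]].
by move=> x y; apply: G1_G2_sub_G.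
Qed.
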